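(* Let $S$ be a set of primes, and for $z>e$ let $S_z=\{p\in S: p\le z\}$. Let $\beta$ and $C$ be real constants and suppose $z>e$ satisfies $\sum_{p\in S_z}1/p\leq \beta\log\log z + C$. Let $N_z$ be the set of all positive integers all of whose prime factors lie in $S_z$. Let $\eta\ge 1$. Then \[ \sum_{\substack{n\in N_z\\ \omega(n)\ge \eta\beta\log\log z}}\frac{1}{n} \ll_{C,\eta} (\log z)^{\beta(\eta-\eta\log\eta)}, \] where the implied constant depends only on $C$ and $\eta$.
   Context: $\omega(n)$ is the number of distinct prime divisors of $n$. *)

From HB Require Import structures.
From mathcomp Require Import all_boot all_order all_algebra.
From mathcomp Require Import all_classical all_reals all_analysis.
Set Implicit Arguments. Unset Strict Implicit. Unset Printing Implicit Defensive.
Import Order.TTheory GRing.Theory Num.Theory.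
Local Open Scope classical_set_scope.
Local Open Scope ring_scope.

Definition omega (n : nat) : nat := size (primes n).

Definition S_le {R : realType} (S : set nat) (z : R) : set nat :=
  [set p | S p /\ (p%:R <= z)].

Definition N_le {R : realType} (S : set nat) (z : R) : set nat :=
  [set n | (0 < n)%N /\ (forall p : nat, prime p -> (p %| n)%N -> S_le S z p)].

From HB Require Import structures.
From mathcomp Require Import all_boot all_order all_algebra.
From mathcomp Require Import all_classical all_reals all_analysis.
From mathcomp Require Import ring lra.
Set Implicit Arguments. Unset Strict Implicit. Unset Printing Implicit Defensive.
Import Order.TTheory GRing.Theory Num.Theory.
Local Open Scope classical_set_scope.
Local Open Scope ring_scope.

(* Rankin's trick.  Put t = eta >= 1 and k = eta beta ln ln z.  Every n in the
   sum has omega n >= k, so 1/n <= t^(omega n - k)/n, and the whole sum is at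
   most t^-k times the sum of the multiplicative function t^omega(n)/n over
   N_z.  That sum is bounded by the Euler product
   prod_{p in S_z} (1 + t/(p-1)) <= exp(t sum_{p in S_z} 1/(p-1)), and
   sum 1/(p-1) <= sum 1/p + 1 <= beta ln ln z + C + 1.  Finally
   t^-k exp(t beta ln ln z) = (ln z)^(beta (eta - eta ln eta)). *)

Section RankinBound.
Variable R : realType.

Lemma sum_inv_powS_le_inv_pred (p M : nat) : (2 <= p)%N ->
  \sum_(j < M) (p%:R ^+ j.+1 : R)^-1 <= (p%:R - 1)^-1.
Proof.
move=> p2; have p1 : (1 : R) < p%:R by rewrite ltr1n.
set x := (p%:R : R)^-1.
have x0 : 0 < x by rewrite invr_gt0; lra.
have x1 : `|x| < 1 by rewrite ger0_norm ?invf_lt1 //; [lra | exact: ltW].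
have -> : (p%:R - 1)^-1 = x / (1 - x) by rewrite /x; field; lra.
apply: le_trans (geometric_le_lim M (ltW x0) x0 x1).
rewrite /series /= big_mkord; under eq_bigr do rewrite -exprVn exprS.
exact: lexx.
Qed.

(* The value of n |-> t ^+ omega n / n at the prime power p ^ k. *)
Definition omega_weight (t : R) (p k : nat) : R :=
  if k == 0%N then 1 else t / p%:R ^+ k.

Lemma omega_weight_ge0 (t : R) (p k : nat) : 0 <= t -> 0 <= omega_weight t p k.
Proof.
by move=> t0; rewrite /omega_weight; case: ifP => // _; rewrite divr_ge0 ?exprn_ge0.
Qed.

Lemma sum_omega_weight_le (t : R) (p M : nat) : 0 <= t -> (2 <= p)%N ->
  \sum_(k < M.+1) omega_weight t p k <= 1 + t / (p%:R - 1).
Proof.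
move=> t0 p2; rewrite big_ord_recl lerD2l.
under eq_bigr do rewrite /omega_weight /= mulrC.
by rewrite -mulr_suml mulrC ler_wpM2l // sum_inv_powS_le_inv_pred.
Qed.

Lemma prod_omega_weight_logn (t : R) (ps : seq nat) (n : nat) :
  uniq ps -> (0 < n)%N -> {subset primes n <= ps} ->
  \prod_(p <- ps) omega_weight t p (logn p n) = t ^+ omega n / n%:R.
Proof.
move=> ps_uniq n0 sub_ps.
have ps_primes : perm_eq [seq p <- ps | p \in primes n] (primes n).
  apply: uniq_perm; rewrite ?filter_uniq ?primes_uniq // => p.
  by rewrite mem_filter andb_idr //; apply: sub_ps.
rewrite (bigID (mem (primes n))) /= [X in _ * X]big1 ?mulr1; last first.
  by move=> p; rewrite -logn_gt0 lt0n negbK /omega_weight => ->.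
rewrite -big_filter (perm_big _ ps_primes) /=.
rewrite (eq_big_seq (fun p => t * ((p ^ logn p n)%N%:R)^-1)); last first.
  by move=> p; rewrite -logn_gt0 lt0n /omega_weight natrX => /negbTE ->.
rewrite big_split /= prodfV -natr_prod.
have -> : (\prod_(p <- primes n) p ^ logn p n)%N = n.
  by rewrite [RHS](prod_prime_decomp n0) prime_decompE big_map.
by rewrite (big_nth 0%N) big_mkord prodr_const card_ord.
Qed.

(* Each n is encoded by its exponent vector (logn p n)_(p in ps); distinct n
   give distinct vectors, and the product of the weights over all vectors
   expands the Euler product. *)
Lemma sum_pow_omega_div_le_Euler_prod (t : R) (ps ns : seq nat) :
  0 <= t -> uniq ps -> all prime ps -> uniq ns ->
  {in ns, forall n, (0 < n)%N} -> {in ns, forall n, {subset primes n <= ps}} ->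
  \sum_(n <- ns) t ^+ omega n / n%:R <= \prod_(p <- ps) (1 + t / (p%:R - 1)).
Proof.
move=> t0 ps_uniq ps_prime ns_uniq ns_pos ns_supp.
pose M := \max_(n <- ns) n.
pose exps (n : nat) : {ffun 'I_(size ps) -> 'I_M.+1} :=
  [ffun i : 'I_(size ps) => inord (logn (nth 0%N ps i) n)].
pose weight (e : {ffun 'I_(size ps) -> 'I_M.+1}) :=
  \prod_(i : 'I_(size ps)) omega_weight t (nth 0%N ps i) (e i).
have logn_lt p n : n \in ns -> (logn p n < M.+1)%N.
  move=> ns_n; apply: leq_trans (ltn_logl p (ns_pos n ns_n)) _.
  by apply/leqW; apply: (@leq_bigmax_seq _ _ xpredT id).
have exps_inj : {in ns &, injective exps}.
  move=> n1 n2 ns_n1 ns_n2 e12.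
  apply: eqn_from_log; rewrite ?ns_pos // => p.
  have [ps_p | ps_Np] := boolP (p \in ps); last first.
    have logn0 n : n \in ns -> logn p n = 0%N.
      move=> ns_n; apply/eqP; rewrite -leqn0 leqNgt logn_gt0.
      exact: contra (ns_supp n ns_n p) ps_Np.
    by rewrite !logn0.
  pose i := Ordinal (etrans (index_mem p ps) ps_p).
  have := congr1 (fun e : {ffun 'I_(size ps) -> 'I_M.+1} => val (e i)) e12.
  by rewrite /= !ffunE /= !inordK ?logn_lt // nth_index.
have weight_exps : {in ns, forall n, t ^+ omega n / n%:R = weight (exps n)}.
  move=> n ns_n.
  rewrite -(@prod_omega_weight_logn t ps n ps_uniq (ns_pos n ns_n) (ns_supp n ns_n)).
  rewrite (big_nth 0%N) big_mkord; apply: eq_bigr => i _.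
  by rewrite ffunE inordK // logn_lt.
rewrite (eq_big_seq _ weight_exps) -(big_map exps xpredT weight).
rewrite big_uniq ?map_inj_in_uniq //.
apply: (@le_trans _ _ (\sum_e weight e)).
  rewrite [leRHS](bigID (mem (map exps ns))) /= lerDl.
  by apply: sumr_ge0 => e _; apply: prodr_ge0 => i _; apply: omega_weight_ge0.
rewrite -(bigA_distr_bigA
  (fun (i : 'I_(size ps)) (k : 'I_M.+1) => omega_weight t (nth 0%N ps i) k)) /=.
rewrite (big_nth 0%N) big_mkord.
apply: ler_prod => i _; rewrite sumr_ge0 => [|k _]; last exact: omega_weight_ge0.
by rewrite sum_omega_weight_le // prime_gt1 // (allP ps_prime) // mem_nth.
Qed.

Lemma sum_inv_pred_sub_inv_le1 (s : seq nat) : uniq s -> all (leq 2) s ->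
  \sum_(m <- s) (((m%:R : R) - 1)^-1 - (m%:R)^-1) <= 1.
Proof.
move=> s_uniq s_ge2.
pose N := maxn 2 (\max_(m <- s) m).+1.
pose g m := ((m%:R : R) - 1)^-1 - (m%:R)^-1.
have g_ge0 m : (2 <= m)%N -> 0 <= g m.
  move=> m2; have m2' : (2 : R) <= m%:R by rewrite ler_nat.
  rewrite subr_ge0 lef_pV2 ?posrE; lra.
have s_iota : perm_eq [seq m <- index_iota 2 N | m \in s] s.
  apply: uniq_perm; rewrite ?filter_uniq ?iota_uniq // => m.
  rewrite mem_filter mem_index_iota andb_idr // => s_m.
  rewrite (allP s_ge2) //= leq_max ltnS; apply/orP; right.
  exact: (@leq_bigmax_seq _ _ xpredT id).
rewrite -(perm_big _ s_iota) big_filter.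
apply: (@le_trans _ _ (\sum_(2 <= m < N) g m)).
  rewrite [leRHS](bigID (mem s)) /= lerDl big_seq_cond sumr_ge0 // => m.
  by rewrite mem_index_iota => /andP[/andP[m2 _] _]; apply: g_ge0.
rewrite (@telescope_sumr_eq _ _ _ (fun m => - ((m.-1)%:R : R)^-1)) ?leq_maxl //.
  rewrite opprK /= invr1.
  have : 0 <= (N.-1%:R : R)^-1 by rewrite invr_ge0.
  lra.
move=> k /andP[k2 _] /=.
by rewrite opprK addrC -subn1 natrB ?(ltnW k2).
Qed.

Lemma sum_inv_pred_le (s : seq nat) : uniq s -> all (leq 2) s ->
  \sum_(m <- s) ((m%:R : R) - 1)^-1 <= \sum_(m <- s) (m%:R : R)^-1 + 1.
Proof.
move=> s_uniq s_ge2; rewrite -lerBlDl -sumrB.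
exact: sum_inv_pred_sub_inv_le1.
Qed.

Lemma prod1D_le_expR_sum (I : eqType) (r : seq I) (F : I -> R) :
  {in r, forall i, -1 <= F i} -> \prod_(i <- r) (1 + F i) <= expR (\sum_(i <- r) F i).
Proof.
move=> F_ge; rewrite expR_sum !big_seq; apply: ler_prod => i r_i.
by rewrite expR_ge1Dx andbT -lerBlDl sub0r F_ge.
Qed.

Lemma rankin_le (t k a : R) (m : nat) : 1 <= t -> k <= m%:R -> 0 <= a ->
  a <= expR (- k * ln t) * (t ^+ m * a).
Proof.
move=> t1 km a0; rewrite -{2}(lnK (lt_le_trans ltr01 t1)) -expRM_natl.
rewrite mulrA -expRD ler_peMl //.
apply: le_trans (expR_ge1Dx _); rewrite lerDl.
have -> : - k * ln t + m%:R * ln t = (m%:R - k) * ln t by ring.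
by rewrite mulr_ge0 ?subr_ge0 ?ln_ge0.
Qed.

Lemma sum_inv_omega_ge_le (eta B k : R) (ps ns : seq nat) :
  1 <= eta -> uniq ps -> all prime ps -> \sum_(p <- ps) (p%:R : R)^-1 <= B ->
  uniq ns -> {in ns, forall n, (0 < n)%N} ->
  {in ns, forall n, {subset primes n <= ps}} -> {in ns, forall n, k <= (omega n)%:R} ->
  \sum_(n <- ns) (n%:R : R)^-1 <= expR (- k * ln eta + eta * (B + 1)).
Proof.
move=> eta1 ps_uniq ps_prime ps_sum ns_uniq ns_pos ns_supp ns_omega.
have eta0 : 0 <= eta by lra.
have ps_ge2 : all (leq 2) ps.
  by apply/allP => p ps_p; apply: prime_gt1; apply: (allP ps_prime).
apply: (@le_trans _ _ (expR (- k * ln eta) * \sum_(n <- ns) eta ^+ omega n / n%:R)).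
  rewrite mulr_sumr !big_seq; apply: ler_sum => n ns_n.
  by rewrite rankin_le ?ns_omega.
rewrite expRD ler_pM2l ?expR_gt0 //.
apply: le_trans (sum_pow_omega_div_le_Euler_prod eta0 ps_uniq ps_prime ns_uniq ns_pos ns_supp) _.
apply: le_trans (prod1D_le_expR_sum _) _ => [p ps_p|].
  have p2 : (2 : R) <= p%:R by rewrite ler_nat (allP ps_ge2).
  have : 0 <= eta / (p%:R - 1) by rewrite divr_ge0 //; lra.
  lra.
rewrite ler_expR -mulr_sumr ler_wpM2l //.
have := sum_inv_pred_le ps_uniq ps_ge2; lra.
Qed.

Lemma esum_EFin_le (T : choiceType) (D : set T) (f : T -> R) (B : R) :
  (forall s : seq T, uniq s -> {subset s <= D} -> \sum_(x <- s) f x <= B) ->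
  (\esum_(x in D) (f x)%:E <= B%:E)%E.
Proof.
move=> sum_le; apply: ge_ereal_sup => _ [X [X_fin X_D] <-].
rewrite fsbig_finite // sumEFin lee_fin sum_le ?fset_uniq // => x.
by rewrite in_fset_set // !inE => /X_D.
Qed.

Lemma finite_S_le (S : set nat) (z : R) : finite_set (S_le S z).
Proof.
apply: (@sub_finite_set _ _ [set` iota 0 (Num.Def.archi_bound `|z|)]); last first.
  exact: finite_seq.
move=> p [_ pz]; change (p \in iota 0 (Num.Def.archi_bound `|z|)).
rewrite mem_iota add0n /= -(ltr_nat R).
by apply: le_lt_trans (le_trans pz (ler_norm z)) _; apply: archi_boundP.
Qed.

End RankinBound.

Theorem lemma5p2 (R : realType) (C eta : R) (heta : 1 <= eta) :
  exists K : R,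
    forall (S : set nat) (beta z : R),
      (forall p, S p -> prime p) ->
      expR 1 < z ->
      (\esum_(p in S_le S z) ((p%:R)^-1)%R%:E <= (beta * ln (ln z) + C)%:E)%E ->
      (\esum_(n in [set n | N_le S z n /\ (eta * beta * ln (ln z) <= (omega n)%:R)%R])
          ((n%:R)^-1)%R%:E
        <= (K * powR (ln z) (beta * (eta - eta * ln eta)))%:E)%E.
Proof.
exists (expR (eta * (C + 1))) => S beta z S_prime e_lt_z S_sum.
have z0 : 0 < z by apply: lt_trans e_lt_z; apply: expR_gt0.
have lnz_gt1 : 1 < ln z by rewrite -(expRK 1) ltr_ln ?posrE ?expR_gt0.
pose ps := finmap.enum_fset (fset_set (S_le S z)).
have ps_mem p : (p \in ps) = (p \in S_le S z).
  by rewrite /ps in_fset_set //; apply: finite_S_le.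
have ps_prime : all prime ps.
  by apply/allP => p; rewrite ps_mem inE => -[/S_prime].
have ps_sum : \sum_(p <- ps) (p%:R : R)^-1 <= beta * ln (ln z) + C.
  by move: S_sum; rewrite esum_fset ?fsbig_finite ?sumEFin ?lee_fin //; apply: finite_S_le.
have -> : expR (eta * (C + 1)) * ln z `^ (beta * (eta - eta * ln eta)) =
    expR (- (eta * beta * ln (ln z)) * ln eta + eta * (beta * ln (ln z) + C + 1)).
  rewrite /powR gt_eqF ?(lt_trans ltr01 lnz_gt1) // -expRD; congr expR; ring.
apply: esum_EFin_le => ns ns_uniq ns_sub.
apply: sum_inv_omega_ge_le heta (finmap.fset_uniq _) ps_prime ps_sum ns_uniq _ _ _ => // n.
- by move=> /ns_sub; rewrite inE => -[[]].
- move=> /ns_sub; rewrite inE => -[[_ n_supp] _] p.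
  by rewrite ps_mem inE mem_primes => /and3P[p_prime _ p_dvd]; apply: n_supp.
- by move=> /ns_sub; rewrite inE => -[].
Qed.
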